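(* Let $p,r$ be positive integers, $s=p+2r$, and write elements of $\mathbb{R}^{(p+s)\times p}$ as $X=(X_0;X_1;X_2;X_3)$ with blocks of $p,p,r,r$ rows; set $Z=X_0+iX_1$, $W=X_2+iX_3$. Let $\hat M\in\mathfrak{so}(p+r,\mathbb{C})$ and define $\hat\Phi^*:\mathbb{R}^{(p+s)\times p}\to\mathbb{C}^{(p+r)\times p}$ by $\hat\Phi^*(X)=\binom{Z}{W}+\hat M\binom{\bar Z}{\bar W}$. Then the complex valued components of $\hat\Phi^*$ constitute an orthogonal harmonic family on $\mathbb{R}^{(p+s)\times p}$ equipped with the Euclidean metric.
   Context: $\mathfrak{so}(p+r,\mathbb{C})$ is the set of complex skew-symmetric $(p+r)\times(p+r)$ matrices. The Euclidean metric is $\langle X,Y\rangle=\mathrm{trace}(X^tY)$. For a Riemannian manifold $(M,g)$ and complex functions $\phi,\psi$, $\tau(\phi)$ is the Laplace–Beltrami operator (extended complex-linearly) and $\kappa(\phi,\psi)=g(\mathrm{grad}\,\phi,\mathrm{grad}\,\psi)$ with $g$ extended complex-bilinearly. A set $\Omega$ of complex functions is an orthogonal harmonic family if $\tau(\phi)=0$ and $\kappa(\phi,\psi)=0$ for all $\phi,\psi\in\Omega$. *)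

From mathcomp Require Import all_boot all_order all_algebra.
From mathcomp Require Import all_classical all_reals all_analysis.
From mathcomp Require Export complex.
Import GRing.Theory Num.Theory.
Local Open Scope ring_scope.
Local Open Scope complex_scope.

Set Implicit Arguments.
Unset Strict Implicit.
Unset Printing Implicit Defensive.

(* Coordinates on R^{m x n} = 'M[R]_(m,n) are the entries x_{ij}; the Euclidean
   metric <X,Y> = trace(X^t Y) makes them orthonormal, with coordinate vector
   fields the directions delta_mx i j. *)

Definition pderivC (R : realType) (m n : nat) (f : 'M[R]_(m, n) -> R[i])
  (i : 'I_m) (j : 'I_n) : 'M[R]_(m, n) -> R[i] :=
  fun x => ('D_(delta_mx i j) (fun y => complex.Re (f y)) x)
           +i* ('D_(delta_mx i j) (fun y => complex.Im (f y)) x).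

(* tension field / Laplace-Beltrami operator for the Euclidean metric,
   extended complex-linearly *)
Definition tau (R : realType) (m n : nat) (f : 'M[R]_(m, n) -> R[i])
  : 'M[R]_(m, n) -> R[i] :=
  fun x => \sum_(i < m) \sum_(j < n) pderivC (pderivC f i j) i j x.

(* conformality operator kappa(phi,psi) = g(grad phi, grad psi) for the
   Euclidean metric, extended complex-bilinearly *)
Definition kappa (R : realType) (m n : nat) (f g : 'M[R]_(m, n) -> R[i])
  : 'M[R]_(m, n) -> R[i] :=
  fun x => \sum_(i < m) \sum_(j < n) (pderivC f i j x * pderivC g i j x).

Definition orthogonal_harmonic_family (R : realType) (m n : nat)
  (Omega : set ('M[R]_(m, n) -> R[i])) : Prop :=
  forall phi psi, Omega phi -> Omega psi ->
    (forall x, tau phi x = 0) /\ (forall x, kappa phi psi x = 0).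

Definition cmx (R : realType) (m n : nat) (A : 'M[R]_(m, n)) : 'M[R[i]]_(m, n) :=
  map_mx (fun a : R => a%:C) A.

(* X = (X0; X1; X2; X3) with blocks of p, p, r, r rows (total p + s, s = p + 2r) *)
Definition blk0 (R : realType) (p r : nat) (X : 'M[R]_(p + p + r + r, p)) : 'M[R]_(p, p) :=
  usubmx (usubmx (usubmx X)).
Definition blk1 (R : realType) (p r : nat) (X : 'M[R]_(p + p + r + r, p)) : 'M[R]_(p, p) :=
  dsubmx (usubmx (usubmx X)).
Definition blk2 (R : realType) (p r : nat) (X : 'M[R]_(p + p + r + r, p)) : 'M[R]_(r, p) :=
  dsubmx (usubmx X).
Definition blk3 (R : realType) (p r : nat) (X : 'M[R]_(p + p + r + r, p)) : 'M[R]_(r, p) :=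
  dsubmx X.

Definition Zof (R : realType) (p r : nat) (X : 'M[R]_(p + p + r + r, p)) : 'M[R[i]]_(p, p) :=
  cmx (blk0 X) + 'i *: cmx (blk1 X).
Definition Wof (R : realType) (p r : nat) (X : 'M[R]_(p + p + r + r, p)) : 'M[R[i]]_(r, p) :=
  cmx (blk2 X) + 'i *: cmx (blk3 X).

Definition PhiHat (R : realType) (p r : nat) (M : 'M[R[i]]_(p + r))
  (X : 'M[R]_(p + p + r + r, p)) : 'M[R[i]]_(p + r, p) :=
  col_mx (Zof X) (Wof X) + M *m map_mx (fun z => z^*) (col_mx (Zof X) (Wof X)).

(* Each component of PhiHat M is an R-linear function of X, so its second
   derivatives vanish and kappa reduces to the constant sum of the products of
   the values at the coordinate directions.  Moving the real (resp. imaginary)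
   coordinate of the entry (m, j) of (Z; W) changes the (k, l) component by
   [l = j] (d_km + M_km) (resp. i [l = j] (d_km - M_km)); as i^2 = -1 the two
   contributions to kappa add up to 2 [l = j] [l' = j] (d_km M_k'm + M_km d_k'm).
   Summing over m and j leaves 2 [l = l'] (M_k'k + M_kk'), which vanishes because
   M is skew-symmetric. *)

From mathcomp Require Import all_boot all_order all_algebra.
From mathcomp Require Import all_classical all_reals all_analysis.
From mathcomp Require Import complex.
From mathcomp Require Import ring zify.
Import GRing.Theory Num.Theory.

Set Implicit Arguments.
Unset Strict Implicit.
Unset Printing Implicit Defensive.

Local Open Scope ring_scope.
Local Open Scope classical_set_scope.
Local Open Scope complex_scope.

Lemma derive_affine_line (R : realType) (V : normedModType R) (f : V -> R)
    (v : V) (a : R) :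
  (forall x h, f (h *: v + x) = f x + h * a) -> forall x, 'D_v f x = a.
Proof.
move=> f_line x; rewrite /derive; apply: cvg_lim => //; apply: cvg_near_cst.
near=> h; rewrite /= f_line addrAC subrr add0r -[_ *: _]/(h^-1 * (h * a)) mulKf //.
near: h; exact: (@nbhs_dnbhs_neq R^o 0).
Unshelve. all: by end_near.
Qed.

Section LinearFunctions.
Variables (R : realType) (m n : nat).

Lemma pderivC_cst (c : R[i]) i j x :
  pderivC (fun _ : 'M[R]_(m, n) => c) i j x = 0.
Proof.
by rewrite /pderivC !(@derive_affine_line _ _ _ _ 0) // => *; rewrite mulr0 addr0.
Qed.

Definition realC_linear (f : 'M[R]_(m, n) -> R[i]) :=
  forall (x y : 'M[R]_(m, n)) (h : R), f (h *: y + x) = h%:C * f y + f x.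

Lemma pderivC_linear f i j x :
  realC_linear f -> pderivC f i j x = f (delta_mx i j).
Proof.
move=> f_lin; rewrite /pderivC.
rewrite (@derive_affine_line _ _ _ _ (complex.Re (f (delta_mx i j)))); last first.
  by move=> y h; rewrite f_lin; case: (f (delta_mx i j)) (f y) => a b [c d] /=;
     rewrite !mul0r subr0 addrC.
rewrite (@derive_affine_line _ _ _ _ (complex.Im (f (delta_mx i j)))); last first.
  by move=> y h; rewrite f_lin; case: (f (delta_mx i j)) (f y) => a b [c d] /=;
     rewrite !mul0r addr0 addrC.
by case: (f _).
Qed.

Lemma tau_linear f : realC_linear f -> forall x, tau f x = 0.
Proof.
move=> f_lin x; apply: big1 => i _; apply: big1 => j _.
rewrite (_ : pderivC f i j = fun _ => f (delta_mx i j)) ?pderivC_cst //.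
by apply: funext => y; apply: pderivC_linear.
Qed.

Lemma kappa_linear f g : realC_linear f -> realC_linear g ->
  forall x, kappa f g x = \sum_i \sum_j f (delta_mx i j) * g (delta_mx i j).
Proof.
by move=> f_lin g_lin x; apply: eq_bigr => i _; apply: eq_bigr => j _;
   rewrite !pderivC_linear.
Qed.

End LinearFunctions.

Lemma sum_mulr_natr_eq (K : pzSemiRingType) n (k : 'I_n) (F : 'I_n -> K) :
  \sum_i F i * (i == k)%:R = F k.
Proof.
under eq_bigr do rewrite mulr_natr mulrb.
by rewrite -big_mkcond big_pred1_eq.
Qed.

Section RealImaginaryRows.
Context {p r : nat}.

(* The rows of X holding the real and the imaginary part of row m of (Z; W). *)
Definition re_row (m : 'I_(p + r)) : 'I_(p + p + r + r) :=
  match fintype.split m with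
  | inl k => lshift r (lshift r (lshift p k))
  | inr k => lshift r (rshift (p + p) k) end.
Definition im_row (m : 'I_(p + r)) : 'I_(p + p + r + r) :=
  match fintype.split m with
  | inl k => lshift r (lshift r (rshift p k))
  | inr k => rshift (p + p + r) k end.

Lemma re_row_val m :
  nat_of_ord (re_row m) = if (m < p)%N then nat_of_ord m else (p + m)%N.
Proof. by rewrite /re_row; case: split_ordP => k -> /=; rewrite ?addnA. Qed.

Lemma im_row_val m :
  nat_of_ord (im_row m) = if (m < p)%N then (p + m)%N else (r + p + m)%N.
Proof. by rewrite /im_row; case: split_ordP => k -> /=; lia. Qed.

Lemma re_row_inj : injective re_row.
Proof.
move=> m m' /(congr1 (@nat_of_ord _)); rewrite !re_row_val => eq_mm'.
apply: ord_inj; move: eq_mm' (ltn_ord m) (ltn_ord m').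
by case: (ltnP m p); case: (ltnP m' p); lia.
Qed.

Lemma im_row_inj : injective im_row.
Proof.
move=> m m' /(congr1 (@nat_of_ord _)); rewrite !im_row_val => eq_mm'.
apply: ord_inj; move: eq_mm' (ltn_ord m) (ltn_ord m').
by case: (ltnP m p); case: (ltnP m' p); lia.
Qed.

Lemma eq_im_re_row m m' : (im_row m == re_row m') = false.
Proof.
apply/negbTE/eqP => /(congr1 (@nat_of_ord _)); rewrite im_row_val re_row_val.
by move: (ltn_ord m) (ltn_ord m'); case: (ltnP m p); case: (ltnP m' p); lia.
Qed.

Lemma re_row_lshift k : re_row (lshift r k) = lshift r (lshift r (lshift p k)).
Proof. by rewrite /re_row (unsplitK (inl k : 'I_p + 'I_r)). Qed.

Lemma im_row_lshift k : im_row (lshift r k) = lshift r (lshift r (rshift p k)).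
Proof. by rewrite /im_row (unsplitK (inl k : 'I_p + 'I_r)). Qed.

Lemma re_row_rshift k : re_row (rshift p k) = lshift r (rshift (p + p) k).
Proof. by rewrite /re_row (unsplitK (inr k : 'I_p + 'I_r)). Qed.

Lemma im_row_rshift k : im_row (rshift p k) = rshift (p + p + r) k.
Proof. by rewrite /im_row (unsplitK (inr k : 'I_p + 'I_r)). Qed.

Lemma big_re_im_rows (V : nmodType) (F : 'I_(p + p + r + r) -> V) :
  \sum_i F i = \sum_(m < p + r) (F (re_row m) + F (im_row m)).
Proof.
rewrite big_split /= !big_split_ord /=.
under [\sum_(i < p) F (re_row _)]eq_bigr do rewrite re_row_lshift.
under [\sum_(i < r) F (re_row _)]eq_bigr do rewrite re_row_rshift.
under [\sum_(i < p) F (im_row _)]eq_bigr do rewrite im_row_lshift.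
under [\sum_(i < r) F (im_row _)]eq_bigr do rewrite im_row_rshift.
by rewrite -addrA addrACA.
Qed.

End RealImaginaryRows.

Lemma conjC_realC (R : rcfType) (x : R) : Num.conj (x%:C) = x%:C :> R[i].
Proof. by apply/eqP; rewrite eq_complex /= oppr0 !eqxx. Qed.

Lemma conjC_iC (R : rcfType) : Num.conj 'i = - 'i :> R[i].
Proof. by apply/eqP; rewrite eq_complex /= oppr0 !eqxx. Qed.

Section PhiHatComponents.
Variables (R : realType) (p r : nat) (M : 'M[R[i]]_(p + r)).
Implicit Type X : 'M[R]_(p + p + r + r, p).

Definition ZW_entry X (m : 'I_(p + r)) (l : 'I_p) : R[i] :=
  (X (re_row m) l)%:C + 'i * (X (im_row m) l)%:C.

Lemma col_ZWE X m l : col_mx (Zof X) (Wof X) m l = ZW_entry X m l.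
Proof.
rewrite /ZW_entry; case: (split_ordP m) => k ->.
  by rewrite col_mxEu re_row_lshift im_row_lshift !mxE.
by rewrite col_mxEd re_row_rshift im_row_rshift !mxE.
Qed.

Definition PhiHat_comp k l X : R[i] :=
  ZW_entry X k l + \sum_m M k m * (ZW_entry X m l)^*.

Lemma PhiHatE k l : (fun X => PhiHat M X k l) = PhiHat_comp k l.
Proof.
apply: funext => X; rewrite /PhiHat mxE col_ZWE mxE; congr (_ + _).
by apply: eq_bigr => m _; rewrite mxE col_ZWE.
Qed.

Lemma PhiHat_comp_linear k l : realC_linear (PhiHat_comp k l).
Proof.
have ZW_lin X (Y : 'M[R]_(p + p + r + r, p)) (h : R) m l' :
    ZW_entry (h *: Y + X) m l' = h%:C * ZW_entry Y m l' + ZW_entry X m l'.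
  by rewrite /ZW_entry !mxE !rmorphD !rmorphM /=; ring.
move=> X Y h; rewrite /PhiHat_comp ZW_lin [in RHS]mulrDr mulr_sumr addrACA -big_split /=.
congr (_ + _); apply: eq_bigr => m _.
by rewrite ZW_lin rmorphD rmorphM /= conjC_realC; ring.
Qed.

Lemma ZW_entry_delta_re m j m' l :
  ZW_entry (delta_mx (re_row m) j) m' l = (l == j)%:R * (m' == m)%:R.
Proof.
rewrite /ZW_entry !mxE (inj_eq re_row_inj) eq_im_re_row /= mulr0 addr0.
by rewrite rmorph_nat -natrM mulnC mulnb.
Qed.

Lemma ZW_entry_delta_im m j m' l :
  ZW_entry (delta_mx (im_row m) j) m' l = 'i * (l == j)%:R * (m' == m)%:R.
Proof.
rewrite /ZW_entry !mxE (inj_eq im_row_inj) eq_sym eq_im_re_row /= add0r.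
by rewrite rmorph_nat -mulrA -natrM mulnC mulnb.
Qed.

Lemma PhiHat_delta_re m j k l :
  PhiHat_comp k l (delta_mx (re_row m) j) = (l == j)%:R * ((k == m)%:R + M k m).
Proof.
rewrite /PhiHat_comp ZW_entry_delta_re.
under eq_bigr do rewrite ZW_entry_delta_re rmorphM /= !rmorph_nat mulrCA.
by rewrite -mulr_sumr sum_mulr_natr_eq mulrDr.
Qed.

Lemma PhiHat_delta_im m j k l :
  PhiHat_comp k l (delta_mx (im_row m) j) = (l == j)%:R * ('i * ((k == m)%:R - M k m)).
Proof.
rewrite /PhiHat_comp ZW_entry_delta_im.
under eq_bigr do rewrite ZW_entry_delta_im rmorphM /= rmorph_nat mulrCA.
rewrite -mulr_sumr sum_mulr_natr_eq !rmorphM /= rmorph_nat conjC_iC.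
ring.
Qed.

End PhiHatComponents.

Lemma mul_re_im_pairs (K : comPzRingType) (z c d x y u v : K) : z ^+ 2 = -1 ->
  c * (x + u) * (d * (y + v)) + c * (z * (x - u)) * (d * (z * (y - v))) =
  c * d * (2 * (x * v + u * y)).
Proof.
move=> z2N1.
have -> : c * (z * (x - u)) * (d * (z * (y - v))) = z ^+ 2 * (c * (x - u) * (d * (y - v))).
  by ring.
by rewrite z2N1; ring.
Qed.

Lemma kappa_PhiHat (R : realType) (p r : nat) (M : 'M[R[i]]_(p + r)) k l k' l' x :
  kappa (PhiHat_comp M k l) (PhiHat_comp M k' l') x =
  (l' == l)%:R * (2 * (M k' k + M k k')).
Proof.
rewrite (kappa_linear (PhiHat_comp_linear _ _ _) (PhiHat_comp_linear _ _ _)).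
rewrite big_re_im_rows.
under eq_bigr do rewrite -big_split /=.
under eq_bigr do under eq_bigr do
  rewrite !PhiHat_delta_re !PhiHat_delta_im mul_re_im_pairs ?sqr_i //.
have sum_rows : \sum_m 2 * ((k == m)%:R * M k' m + M k m * (k' == m)%:R) =
                2 * (M k' k + M k k').
  rewrite -mulr_sumr big_split /=; congr (_ * (_ + _)).
    by under eq_bigr do rewrite mulrC eq_sym; rewrite sum_mulr_natr_eq.
  by under eq_bigr do rewrite eq_sym; rewrite sum_mulr_natr_eq.
rewrite exchange_big /=; under eq_bigr do rewrite -mulr_sumr sum_rows.
rewrite -mulr_suml; congr (_ * _).
by under eq_bigr do rewrite mulrC [l == _]eq_sym; rewrite sum_mulr_natr_eq.
Qed.

Theorem proposition9p1 (R : realType) (p r : nat) (hp : (0 < p)%N) (hr : (0 < r)%N)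
  (M : 'M[R[i]]_(p + r)) (hM : M^T = - M) :
  orthogonal_harmonic_family
    (range (fun kl : 'I_(p + r) * 'I_p =>
              fun X : 'M[R]_(p + p + r + r, p) => PhiHat M X kl.1 kl.2)).
Proof.
move=> _ _ [[k l] _ <-] [[k' l'] _ <-]; rewrite /= !PhiHatE.
split; first exact: tau_linear (PhiHat_comp_linear M k l).
have skewM : M k' k = - M k k' by move/matrixP: hM => /(_ k k'); rewrite !mxE.
by move=> x; rewrite kappa_PhiHat skewM addNr !mulr0.
Qed.
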